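(* Let $A,B\in\mathbb{C}^{n\times n}$. The following are equivalent: (i) $A\leq^{GD1}B$; (ii) $A =AA^-B=BA^{GD}A$ for some $A^- \in A\{1\}$ and some $A^{GD} \in A\{GD\}$; (iii) $A = AA^{GD1}B=BA^{GD1}A$ for some GD1 inverse $A^{GD1}$ of $A$; (iv) for some $A^- \in A\{1\}$ and some $A^{GD} \in A\{GD\}$ there exist idempotents $P,Q\in\mathbb{C}^{n\times n}$ such that $R(P)=R(A)$, $N(P)=N(AA^-)$, $R(Q)=R(A^{GD}A)$, $N(Q)=N(A)$ and $A=PB=BQ$; (v) for some GD1 inverse $A^{GD1}$ of $A$ there exist idempotents $P,Q\in\mathbb{C}^{n\times n}$ such that $R(P)=R(A)$, $N(P)=N(A^{GD1})$, $R(Q)=R(A^{GD1})$, $N(Q)=N(A)$ and $A=PB=BQ$.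
   Context: For $A\in\mathbb{C}^{n\times n}$, $ind(A)$ is the smallest nonnegative integer $k$ with $\mathrm{rank}(A^k)=\mathrm{rank}(A^{k+1})$. $A\{1\}$ is the set of matrices $X$ with $AXA=A$. With $k=ind(A)$, $A\{GD\}$ is the set of matrices $X$ with $AXA=A$, $XA^{k+1}=A^k$, $A^{k+1}X=A^k$ (G-Drazin inverses). A GD1 inverse of $A$ is a matrix $A^{GD1}=A^{GD}AA^-$ with $A^-\in A\{1\}$, $A^{GD}\in A\{GD\}$. We write $A\leq^{GD1}B$ if $AA^{GD1}=BA^{GD1}$ and $A^{GD1}A=A^{GD1}B$ for some GD1 inverse $A^{GD1}$ of $A$. $R(\cdot)$, $N(\cdot)$ denote range and null space. *)

From HB Require Import structures.
From mathcomp Require Import all_boot all_order all_algebra.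
From mathcomp Require Import complex.
From mathcomp Require Import Rstruct.
Set Implicit Arguments. Unset Strict Implicit. Unset Printing Implicit Defensive.
Import Order.TTheory GRing.Theory Num.Theory.
Local Open Scope ring_scope.

Notation C := (complex Rdefinitions.R).

Section GD.
Variable n : nat.
Implicit Types A B X P : 'M[C]_n.

Definition range A : 'cV[C]_n -> Prop := fun y => exists x, y = A *m x.
Definition nullsp A : 'cV[C]_n -> Prop := fun x => A *m x = 0.
Definition same_set (S T : 'cV[C]_n -> Prop) : Prop := forall v, S v <-> T v.

Definition is_index A (k : nat) : Prop :=
  \rank (A ^+ k) = \rank (A ^+ k.+1) /\
  (forall j, (j < k)%N -> \rank (A ^+ j) <> \rank (A ^+ j.+1)).

Definition inner_inv A X : Prop := A *m X *m A = A.

Definition GD_inv A X : Prop :=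
  exists k, is_index A k /\
    A *m X *m A = A /\ X *m A ^+ k.+1 = A ^+ k /\ A ^+ k.+1 *m X = A ^+ k.

Definition GD1_inv A X : Prop :=
  exists G M, GD_inv A G /\ inner_inv A M /\ X = G *m A *m M.

Definition GD1_le A B : Prop :=
  exists X, GD1_inv A X /\ A *m X = B *m X /\ X *m A = X *m B.

Definition idem_mx P : Prop := P *m P = P.
End GD.

(* A GD1 inverse X = A^GD A A^- is a reflexive inverse of A (AXA = A, XAX = X)
   with AX = AA^- and XA = A^GD A; only A A^GD A = A is needed for this.  For a
   reflexive inverse X, the conditions AX = BX, XA = XB are equivalent to
   A = AXB = BXA, and the idempotents with range R(A) and null space N(X),
   resp. range R(X) and null space N(A), are necessarily AX and XA.  Hence all
   five conditions reduce to A = AXB = BXA. *)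
From HB Require Import structures.
From mathcomp Require Import all_boot all_order all_algebra.
From mathcomp Require Import complex Rstruct.
Import Order.TTheory GRing.Theory Num.Theory.
Local Open Scope ring_scope.
Set Implicit Arguments. Unset Strict Implicit.

Section ReflexiveInverse.
Variables (R : pzSemiRingType) (m n : nat).
Variables (A : 'M[R]_(m, n)) (X : 'M[R]_(n, m)).
Hypothesis AXA : A *m X *m A = A.
Hypothesis XAX : X *m A *m X = X.

Lemma reflexive_inv_orderE (B : 'M[R]_(m, n)) :
  (A *m X = B *m X /\ X *m A = X *m B) <-> (A = A *m X *m B /\ A = B *m X *m A).
Proof.
split=> [[eAX eXA]|[eA1 eA2]]; split.
- by rewrite -{1}AXA -mulmxA eXA mulmxA.
- by rewrite -{1}AXA eAX.
- by rewrite {1}eA2 -!mulmxA (mulmxA X) XAX.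
- by rewrite {1}eA1 !mulmxA XAX.
Qed.

End ReflexiveInverse.

Lemma mul_inner_prodr (R : pzSemiRingType) m n
    (A : 'M[R]_(m, n)) (G M : 'M[R]_(n, m)) :
  A *m G *m A = A -> A *m (G *m A *m M) = A *m M.
Proof. by move=> AGA; rewrite !mulmxA AGA. Qed.

Lemma mul_inner_prodl (R : pzSemiRingType) m n
    (A : 'M[R]_(m, n)) (G M : 'M[R]_(n, m)) :
  A *m M *m A = A -> G *m A *m M *m A = G *m A.
Proof. by move=> AMA; rewrite -!mulmxA (mulmxA A) AMA. Qed.

Section InnerInverseProduct.
Variables (R : pzSemiRingType) (m n : nat).
Variables (A : 'M[R]_(m, n)) (G M : 'M[R]_(n, m)).
Hypothesis AGA : A *m G *m A = A.
Hypothesis AMA : A *m M *m A = A.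

Lemma inner_prod_inner : A *m (G *m A *m M) *m A = A.
Proof. by rewrite (mul_inner_prodr M AGA). Qed.

Lemma inner_prod_outer : G *m A *m M *m A *m (G *m A *m M) = G *m A *m M.
Proof.
by rewrite (mul_inner_prodl G AMA) -!mulmxA (mulmxA A G) (mulmxA (A *m G)) AGA.
Qed.

Lemma inner_prod_factorE (B : 'M[R]_(m, n)) :
  (A = A *m (G *m A *m M) *m B /\ A = B *m (G *m A *m M) *m A) <->
  (A = A *m M *m B /\ A = B *m G *m A).
Proof.
by rewrite (mul_inner_prodr M AGA) -(mulmxA B) (mul_inner_prodl G AMA) mulmxA.
Qed.

End InnerInverseProduct.

Lemma GD_inv_inner n (A G : 'M[C]_n) : GD_inv A G -> inner_inv A G.
Proof. by case=> k [_ []]. Qed.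

Lemma GD1_inv_reflexive n (A X : 'M[C]_n) :
  GD1_inv A X -> A *m X *m A = A /\ X *m A *m X = X.
Proof.
case=> G [M [/GD_inv_inner AGA [AMA ->]]].
by split; [exact: inner_prod_inner | exact: inner_prod_outer].
Qed.

Section RangeNullspace.
Variable n : nat.
Implicit Types A B E G K L M P Q X : 'M[C]_n.

Lemma same_set_sym (S T : 'cV[C]_n -> Prop) : same_set S T -> same_set T S.
Proof. by move=> ST v; apply: iff_sym. Qed.

Lemma same_set_trans (S T U : 'cV[C]_n -> Prop) :
  same_set S T -> same_set T U -> same_set S U.
Proof. by move=> ST TU v; apply: iff_trans. Qed.

Lemma range_mulmx_inner A X :
  A *m X *m A = A -> same_set (range (A *m X)) (range A).
Proof.
move=> AXA v; split=> [[x ->]|[x ->]]; first by exists (X *m x); rewrite mulmxA.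
by exists (A *m x); rewrite !mulmxA AXA.
Qed.

Lemma nullsp_mulmx_inner A X :
  A *m X *m A = A -> same_set (nullsp (X *m A)) (nullsp A).
Proof.
rewrite /nullsp => AXA v; split=> Av0; last by rewrite -mulmxA Av0 mulmx0.
by rewrite -AXA -!mulmxA (mulmxA X) Av0 mulmx0.
Qed.

Lemma range_mulmx_outer A X :
  X *m A *m X = X -> same_set (range (X *m A)) (range X).
Proof. exact: range_mulmx_inner. Qed.

Lemma nullsp_mulmx_outer A X :
  X *m A *m X = X -> same_set (nullsp (A *m X)) (nullsp X).
Proof. exact: nullsp_mulmx_inner. Qed.

Lemma nullsp_mul_inner_prod A G M : A *m G *m A = A -> A *m M *m A = A ->
  same_set (nullsp (A *m M)) (nullsp (G *m A *m M)).
Proof.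
move=> AGA AMA; rewrite -(mul_inner_prodr M AGA).
by apply: nullsp_mulmx_outer; exact: inner_prod_outer.
Qed.

Lemma range_mul_inner_prod A G M : A *m G *m A = A -> A *m M *m A = A ->
  same_set (range (G *m A)) (range (G *m A *m M)).
Proof.
move=> AGA AMA; rewrite -{1}(mul_inner_prodl G AMA).
by apply: range_mulmx_outer; exact: inner_prod_outer.
Qed.

(* An idempotent is determined by its range and its null space: [x - E x] lies
   in N(E), and [E x] in R(E). *)
Lemma idem_mx_range_nullsp_eq P E : idem_mx P -> idem_mx E ->
  (forall v, range E v -> range P v) -> (forall v, nullsp E v -> nullsp P v) ->
  P = E.
Proof.
move=> PP EE rEP nEP; apply/trmx_inj/eqP/mulmxP => u.
rewrite -[u]trmxK -!trmx_mul; congr (_^T); set x := u^T.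
have : nullsp E (x - E *m x) by rewrite /nullsp mulmxBr mulmxA EE subrr.
move/nEP/eqP; rewrite /nullsp mulmxBr subr_eq0 => /eqP ->.
by have [y ->] := rEP (E *m x) (ex_intro _ x erefl); rewrite mulmxA PP.
Qed.

Definition idem_factors A B K L :=
  exists P Q : 'M[C]_n, idem_mx P /\ idem_mx Q /\
    same_set (range P) (range A) /\ same_set (nullsp P) (nullsp K) /\
    same_set (range Q) (range L) /\ same_set (nullsp Q) (nullsp A) /\
    A = P *m B /\ A = B *m Q.

Lemma idem_factors_eq A B K K' L L' :
  same_set (nullsp K) (nullsp K') -> same_set (range L) (range L') ->
  idem_factors A B K L -> idem_factors A B K' L'.
Proof.
move=> KK' LL' [P [Q [PP [QQ [rP [nP [rQ [nQ eAPB]]]]]]]].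
exists P, Q; do 3!split=> //; split; first exact: same_set_trans nP KK'.
by split=> //; exact: same_set_trans rQ LL'.
Qed.

Lemma idem_factors_reflexiveE A B X : A *m X *m A = A -> X *m A *m X = X ->
  idem_factors A B X X <-> A = A *m X *m B /\ A = B *m X *m A.
Proof.
move=> AXA XAX; have AXAX : idem_mx (A *m X) by rewrite /idem_mx mulmxA AXA.
have XAXA : idem_mx (X *m A) by rewrite /idem_mx mulmxA XAX.
split=> [[P [Q [PP [QQ [rP [nP [rQ [nQ [eAPB eABQ]]]]]]]]]|[eA1 eA2]].
  have eP : P = A *m X.
    by apply: idem_mx_range_nullsp_eq => // v;
      [move/(range_mulmx_inner AXA)/rP | move/(nullsp_mulmx_outer XAX)/nP].
  have eQ : Q = X *m A.
    by apply: idem_mx_range_nullsp_eq => // v;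
      [move/(range_mulmx_outer XAX)/rQ | move/(nullsp_mulmx_inner AXA)/nQ].
  by rewrite -eP -mulmxA -eQ.
exists (A *m X), (X *m A); do 2!split=> //.
split; first exact: range_mulmx_inner.
split; first exact: nullsp_mulmx_outer.
split; first exact: range_mulmx_outer.
split; first exact: nullsp_mulmx_inner.
by rewrite mulmxA; split.
Qed.

End RangeNullspace.

Unset Implicit Arguments.

Theorem theorem2p15 (n : nat) (A B : 'M[C]_n) :
  [<-> GD1_le A B;
       exists M G, inner_inv A M /\ GD_inv A G /\
         A = A *m M *m B /\ A = B *m G *m A;
       exists X, GD1_inv A X /\ A = A *m X *m B /\ A = B *m X *m A;
       exists M G, inner_inv A M /\ GD_inv A G /\
         exists P Q : 'M[C]_n, idem_mx P /\ idem_mx Q /\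
           same_set (range P) (range A) /\ same_set (nullsp P) (nullsp (A *m M)) /\
           same_set (range Q) (range (G *m A)) /\ same_set (nullsp Q) (nullsp A) /\
           A = P *m B /\ A = B *m Q;
       exists X, GD1_inv A X /\
         exists P Q : 'M[C]_n, idem_mx P /\ idem_mx Q /\
           same_set (range P) (range A) /\ same_set (nullsp P) (nullsp X) /\
           same_set (range Q) (range X) /\ same_set (nullsp Q) (nullsp A) /\
           A = P *m B /\ A = B *m Q].
Proof.
tfae.
- move=> [X [GD1_X ord]]; have [AXA XAX] := GD1_inv_reflexive GD1_X.
  have [G [M [GD_G [AMA eX]]]] := GD1_X; exists M, G; do 2!split=> //.
  rewrite -(inner_prod_factorE (GD_inv_inner GD_G) AMA) -eX.
  exact/(reflexive_inv_orderE AXA XAX).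
- move=> [M [G [AMA [GD_G eA]]]]; exists (G *m A *m M); split; first by exists G, M.
  exact/(inner_prod_factorE (GD_inv_inner GD_G) AMA).
- move=> [X [GD1_X eA]]; have [AXA XAX] := GD1_inv_reflexive GD1_X.
  have [G [M [GD_G [AMA eX]]]] := GD1_X; exists M, G; do 2!split=> //.
  have := (idem_factors_reflexiveE B AXA XAX).2 eA; rewrite eX.
  apply: idem_factors_eq; apply: same_set_sym.
    exact: nullsp_mul_inner_prod (GD_inv_inner GD_G) AMA.
  exact: range_mul_inner_prod (GD_inv_inner GD_G) AMA.
- move=> [M [G [AMA [GD_G fact]]]]; exists (G *m A *m M); split; first by exists G, M.
  apply: idem_factors_eq fact.
    exact: nullsp_mul_inner_prod (GD_inv_inner GD_G) AMA.
  exact: range_mul_inner_prod (GD_inv_inner GD_G) AMA.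
- move=> [X [GD1_X fact]]; have [AXA XAX] := GD1_inv_reflexive GD1_X.
  by exists X; split=> //; apply/(reflexive_inv_orderE AXA XAX)/idem_factors_reflexiveE.
Qed.
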